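(* Let $G$ be a connected $(2K_2, HVN)$-free graph. Then either $G$ is $(2K_2,\text{diamond})$-free, or there exists a partition $(V_1,V_2,V_3,V_4)$ of $V(G)$ (parts possibly empty) such that (i) $G[V_1]$ is a $(2K_2,\text{paw})$-free graph with $\omega(G[V_1])\le\omega(G)-1$, and (ii) $V_i$ is an independent set for each $i\in\{2,3,4\}$.
   Context: All graphs are finite, simple and undirected. $2K_2$ is the disjoint union of two edges. A diamond is $K_4$ minus an edge. A paw is the graph on $\{a,b,c,d\}$ with edges $ab,bc,ac,ad$. $HVN$ is the graph $K_1+\text{paw}$, i.e., a $K_4$ together with one further vertex adjacent to exactly two vertices of the $K_4$. A graph is $\mathcal F$-free if it has no induced subgraph isomorphic to a member of $\mathcal F$. $G[S]$ is the subgraph induced by $S$; $\omega$ is the clique number. *)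

From mathcomp Require Import all_boot.
Set Implicit Arguments. Unset Strict Implicit. Unset Printing Implicit Defensive.

Definition simple_graph (T : finType) (e : rel T) : Prop :=
  symmetric e /\ irreflexive e.

Definition connected (T : finType) (e : rel T) : Prop :=
  forall x y : T, connect e x y.

Definition pat (k : nat) (E : seq (nat * nat)) : rel 'I_k :=
  fun i j => ((nat_of_ord i, nat_of_ord j) \in E) || ((nat_of_ord j, nat_of_ord i) \in E).

Definition twoK2 : rel 'I_4 := @pat 4 [:: (0,1); (2,3)].
Definition diamond : rel 'I_4 := @pat 4 [:: (0,1); (0,2); (0,3); (1,2); (1,3)].
Definition paw : rel 'I_4 := @pat 4 [:: (0,1); (1,2); (0,2); (0,3)].
(* HVN: K4 on 0..3, vertex 4 adjacent to exactly 0 and 1 *)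
Definition HVN : rel 'I_5 :=
  @pat 5 [:: (0,1); (0,2); (0,3); (1,2); (1,3); (2,3); (4,0); (4,1)].

Definition has_induced (T : finType) (e : rel T) (S : {set T}) (k : nat) (h : rel 'I_k) : Prop :=
  exists f : 'I_k -> T, injective f /\ (forall i, f i \in S) /\
    (forall i j, e (f i) (f j) = h i j).

Definition free_in (T : finType) (e : rel T) (S : {set T}) (k : nat) (h : rel 'I_k) : Prop :=
  ~ has_induced e S h.

Definition is_clique (T : finType) (e : rel T) (S A : {set T}) : bool :=
  (A \subset S) && [forall x in A, forall y in A, (x != y) ==> e x y].

Definition omega_in (T : finType) (e : rel T) (S : {set T}) : nat :=
  \max_(A : {set T} | is_clique e S A) #|A|.

Definition independent (T : finType) (e : rel T) (A : {set T}) : Prop :=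
  forall x y, x \in A -> y \in A -> ~~ e x y.

From mathcomp Require Import all_boot.
From Stdlib Require Import Classical.

(* A diamond contains a triangle abc, and only this triangle is used (nor is
   connectedness needed).  Take V1 = N(a), and split the rest by adjacency to b
   and c: the common non-neighbours of a and b; the non-neighbours of a adjacent
   to both b and c (a itself among them); and those adjacent to b but not c.
   An edge inside the second or fourth part would form an induced 2K2 with ab or
   ac; an edge xy inside the third part makes bcxy a K4 to which a is attached
   by exactly two edges, an HVN.  In N(a), a paw together with a is an HVN, and
   adding a to a clique of N(a) gives a larger clique of G. *)

Set Implicit Arguments.
Unset Strict Implicit.
Unset Printing Implicit Defensive.

Definition edge_in (E : seq (nat * nat)) : rel nat :=
  fun i j => ((i, j) \in E) || ((j, i) \in E).

(* Any two distinct vertices of the pattern are adjacent or told apart by a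
   third one; stated over [nat] so that it is decided by computation. *)
Definition separating_pat (k : nat) (E : seq (nat * nat)) : bool :=
  all (fun i => all (fun j =>
    [|| i == j, edge_in E i j | has (fun l => edge_in E i l != edge_in E j l) (iota 0 k)])
    (iota 0 k)) (iota 0 k).

Section SetPartition.
Variables (T : finType) (A B C : {set T}).
Let V2 := ~: (A :|: B).
Let V3 := B :&: C :\: A.
Let V4 := B :\: (A :|: C).

Lemma cover_split3 : A :|: V2 :|: V3 :|: V4 = setT.
Proof.
by apply/setP=> x; rewrite !inE; case: (x \in A); case: (x \in B); case: (x \in C).
Qed.

Lemma disjoint_split3 :
  [disjoint A & V2] && [disjoint A & V3] && [disjoint A & V4] &&
  [disjoint V2 & V3] && [disjoint V2 & V4] && [disjoint V3 & V4].
Proof.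
rewrite -!setI_eq0; do !(apply/andP; split); apply/eqP/setP=> x; rewrite !inE;
by case: (x \in A); case: (x \in B); case: (x \in C).
Qed.

End SetPartition.

Section SimpleGraph.
Variables (T : finType) (e : rel T).
Hypotheses (e_sym : symmetric e) (e_irr : irreflexive e).

Lemma pat_copy_inj k E (f : 'I_k -> T) :
  separating_pat k E -> (forall i j, e (f i) (f j) = pat E i j) -> injective f.
Proof.
move=> sepE fE i j fij; apply/val_inj/eqP; apply: contraT => neq_ij.
have memI (m : 'I_k) : val m \in iota 0 k by rewrite mem_iota add0n ltn_ord.
have /allP/(_ _ (memI i))/allP/(_ _ (memI j)) := sepE.
rewrite (negbTE neq_ij) -[edge_in E i j]/(pat E i j) -fE fij e_irr /=.
case/hasP=> l; rewrite mem_iota add0n => /= lk.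
rewrite -[edge_in E i l]/(pat E i (Ordinal lk)) -[edge_in E j l]/(pat E j (Ordinal lk)).
by rewrite -!fE fij eqxx.
Qed.

Lemma has_induced_pat k E (S : {set T}) (f : 'I_k -> T) :
  separating_pat k E -> (forall i, f i \in S) ->
  (forall i j, e (f i) (f j) = pat E i j) -> has_induced e S (@pat k E).
Proof. by move=> sepE fS fE; exists f; split; [exact: pat_copy_inj sepE fE | split]. Qed.

Lemma free_in_subset k (h : rel 'I_k) (S S' : {set T}) :
  S \subset S' -> free_in e S' h -> free_in e S h.
Proof.
move=> sSS' freeS' [f [f_inj [fS fE]]]; apply: freeS'.
by exists f; split=> //; split=> // i; apply: (subsetP sSS').
Qed.

Lemma no_induced_2K2 p q x y :
  free_in e setT twoK2 -> e p q -> e x y ->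
  ~~ e p x -> ~~ e p y -> ~~ e q x -> ~~ e q y -> False.
Proof.
move=> free2K2 pq xy px py qx qy; apply: free2K2.
apply: (@has_induced_pat _ _ _ (fun i : 'I_4 => nth p [:: p; q; x; y] i)) => //.
move=> [[|[|[|[|i]]]] Hi] [[|[|[|[|j]]]] Hj] //=;
by rewrite ?e_irr ?(e_sym q p) ?(e_sym x p) ?(e_sym y p) ?(e_sym x q) ?(e_sym y q)
   ?(e_sym y x) ?pq ?xy ?(negbTE px) ?(negbTE py) ?(negbTE qx) ?(negbTE qy).
Qed.

Lemma no_induced_HVN p q x y z :
  free_in e setT HVN ->
  e p q -> e p x -> e p y -> e q x -> e q y -> e x y ->
  e z p -> e z q -> ~~ e z x -> ~~ e z y -> False.
Proof.
move=> freeHVN pq px py qx qy xy zp zq zx zy; apply: freeHVN.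
apply: (@has_induced_pat _ _ _ (fun i : 'I_5 => nth p [:: p; q; x; y; z] i)) => //.
move=> [[|[|[|[|[|i]]]]] Hi] [[|[|[|[|[|j]]]]] Hj] //=;
by rewrite ?e_irr ?(e_sym q p) ?(e_sym x p) ?(e_sym y p) ?(e_sym x q) ?(e_sym y q)
   ?(e_sym y x) ?(e_sym p z) ?(e_sym q z) ?(e_sym x z) ?(e_sym y z)
   ?pq ?px ?py ?qx ?qy ?xy ?zp ?zq ?(negbTE zx) ?(negbTE zy).
Qed.

Definition nbhd (a : T) : {set T} := [set x | e a x].

Lemma omega_in_witness (S : {set T}) : exists2 A, is_clique e S A & omega_in e S = #|A|.
Proof.
have clique0 : is_clique e S set0.
  by rewrite /is_clique sub0set; apply/forallP=> x; rewrite inE.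
rewrite /omega_in (bigmax_eq_arg _ clique0).
by case: arg_maxnP => // A clA _; exists A.
Qed.

Lemma clique_nbhdU1 a A : is_clique e (nbhd a) A -> is_clique e setT (a |: A).
Proof.
case/andP=> /subsetP sA /forallP clA; rewrite /is_clique subsetT.
have adj_a x : x \in A -> e a x by move/sA; rewrite inE.
apply/forallP=> x; apply/implyP; rewrite in_setU1 => /predU1P[-> | xA];
apply/forallP=> y; apply/implyP; rewrite in_setU1 => /predU1P[-> | yA];
apply/implyP; rewrite ?eqxx // => neq_xy.
- exact: adj_a.
- by rewrite e_sym adj_a.
by have /forall_inP/(_ y yA)/implyP := implyP (clA x) xA; apply.
Qed.

Lemma omega_nbhd_lt a : omega_in e (nbhd a) < omega_in e setT.
Proof.
have [A clA ->] := omega_in_witness (nbhd a).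
have a_notin_A : a \notin A.
  by apply/negP=> /(subsetP (andP clA).1); rewrite inE e_irr.
have := @leq_bigmax_cond _ _ (fun A : {set T} => #|A|) _ (clique_nbhdU1 clA).
by rewrite cardsU1 a_notin_A.
Qed.

(* The paw 0-1-2 + 3 inside N(a) and the vertex a form an HVN with K4 {a,0,1,2}
   and pendant vertex 3, adjacent to a and 0 only. *)
Lemma paw_free_nbhd a : free_in e setT HVN -> free_in e (nbhd a) paw.
Proof.
move=> freeHVN [g [_ [g_nbhd gE]]].
have adj_a i : e a (g i) by have := g_nbhd i; rewrite inE.
apply: (no_induced_HVN freeHVN (p := a) (q := g (@Ordinal 4 0 isT))
          (x := g (@Ordinal 4 1 isT)) (y := g (@Ordinal 4 2 isT))
          (z := g (@Ordinal 4 3 isT))); rewrite ?gE ?adj_a //.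
by rewrite e_sym adj_a.
Qed.

Lemma independentS (A B : {set T}) : A \subset B -> independent e B -> independent e A.
Proof. by move=> /subsetP sAB indB x y /sAB xB /sAB; apply: indB. Qed.

Lemma independent_common_nonnbhd a b :
  free_in e setT twoK2 -> e a b -> independent e (~: (nbhd a :|: nbhd b)).
Proof.
move=> free2K2 ab x y; rewrite !inE !negb_or => /andP[ax bx] /andP[ay b_y].
by apply/negP=> xy; apply: (no_induced_2K2 free2K2 ab xy).
Qed.

Lemma independent_common_nbhdD a b c :
  free_in e setT HVN -> e a b -> e a c -> e b c ->
  independent e (nbhd b :&: nbhd c :\: nbhd a).
Proof.
move=> freeHVN ab ac bc x y; rewrite !inE => /and3P[ax bx cx] /and3P[ay b_y cy].
by apply/negP=> xy; apply: (no_induced_HVN freeHVN bc bx b_y cx cy xy ab ac ax ay).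
Qed.

End SimpleGraph.

Theorem theorem3p7 (T : finType) (e : rel T) :
  simple_graph e -> connected e ->
  free_in e setT twoK2 -> free_in e setT HVN ->
  (free_in e setT twoK2 /\ free_in e setT diamond) \/
  (exists V1 V2 V3 V4 : {set T},
     [/\ V1 :|: V2 :|: V3 :|: V4 = setT,
         ([disjoint V1 & V2] && [disjoint V1 & V3] && [disjoint V1 & V4] &&
          [disjoint V2 & V3] && [disjoint V2 & V4] && [disjoint V3 & V4]),
         (free_in e V1 twoK2 /\ free_in e V1 paw /\
          omega_in e V1 <= omega_in e setT - 1)
         & (independent e V2 /\ independent e V3 /\ independent e V4)]).
Proof.
move=> [e_sym e_irr] _ free2K2 freeHVN.
have [[f [_ [_ fE]]] | ] := classic (has_induced e setT diamond); last by left.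
right.
set a := f (@Ordinal 4 0 isT); set b := f (@Ordinal 4 1 isT); set c := f (@Ordinal 4 2 isT).
have ab : e a b by rewrite fE.
have ac : e a c by rewrite fE.
have bc : e b c by rewrite fE.
exists (nbhd e a), (~: (nbhd e a :|: nbhd e b)), (nbhd e b :&: nbhd e c :\: nbhd e a),
  (nbhd e b :\: (nbhd e a :|: nbhd e c)).
split; [exact: cover_split3 | exact: disjoint_split3 | split; [|split] | split; [|split]].
- exact: free_in_subset (subsetT _) free2K2.
- exact: paw_free_nbhd.
- have lt_omega := omega_nbhd_lt e_sym e_irr a.
  by rewrite subn1 -ltnS (ltn_predK lt_omega).
- exact: independent_common_nonnbhd.
- exact: independent_common_nbhdD.
- apply: (independentS _ (independent_common_nonnbhd e_sym e_irr free2K2 ac)).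
  by rewrite setDE subsetIr.
Qed.
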